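(* Let $p\ge 2$ and let $a,b\in\mathbb{F}_p$ be nonzero binary floating-point numbers of precision $p$ such that $\mathrm{ufp}(a)\le \mathrm{ufp}(b)$ and $\mathrm{uls}(a)\ge \mathrm{ulp}(b)$. Compute $$s=\circ_1(a+b),\qquad t=\circ_3\bigl(b-\circ_2(s-a)\bigr),$$ where each of $\circ_1,\circ_2,\circ_3$ is a faithful rounding. The three roundings may be different from one another, i.e. each independently rounds down or up. Then $s+t=a+b$.
   Context: $\mathbb{F}_p$ denotes the set of radix-2 floating-point numbers of precision $p$ with unbounded exponent range, so there is no underflow or overflow. Every nonzero $x\in\mathbb{F}_p$ can be written as $x=\pm M\cdot 2^{e}$ with $M,e\in\mathbb{Z}$ and $2^{p-1}\le M<2^p$. For such $x$: - $\mathrm{ufp}(x)=2^{\lfloor\log_2|x|\rfloor}$ is the unit in the first place; - $\mathrm{ulp}(x)=2^{1-p}\,\mathrm{ufp}(x)$ is the unit in the last place; - $\mathrm{uls}(x)$ is the unit in the last significant place, i.e. the largest power of $2$ dividing $x$. A faithful rounding $\circ(y)$ of a real number $y$ is any element of $\{\mathrm{RD}(y),\mathrm{RU}(y)\}$, where $\mathrm{RD}$ and $\mathrm{RU}$ are rounding toward $-\infty$ and toward $+\infty$. In particular $\circ(y)=y$ whenever $y\in\mathbb{F}_p$. The displayed computation is the Fast2Sum algorithm with faithful roundings. *)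

From Stdlib Require Import Reals ZArith ClassicalEpsilon.
Open Scope R_scope.

Definition is_int (r : R) : Prop := exists z : Z, r = IZR z.

Definition Fp (p : nat) (x : R) : Prop :=
  x = 0 \/
  exists M e : Z, x = IZR M * powerRZ 2 e /\
                  2 ^ (p - 1) <= Rabs (IZR M) < 2 ^ p.

(* ufp(x) = 2^floor(log2 |x|)  (Int_part is the floor function) *)
Definition ufp (x : R) : R :=
  powerRZ 2 (Int_part (ln (Rabs x) / ln 2)).

Definition ulp (p : nat) (x : R) : R :=
  powerRZ 2 (1 - Z.of_nat p) * ufp x.

Definition uls (x : R) : R :=
  powerRZ 2 (epsilon (inhabits 0%Z)
    (fun k : Z => is_int (x / powerRZ 2 k) /\ ~ is_int (x / powerRZ 2 (k + 1)))).

Definition is_RD (p : nat) (y f : R) : Prop :=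
  Fp p f /\ f <= y /\ forall g, Fp p g -> g <= y -> g <= f.
Definition is_RU (p : nat) (y f : R) : Prop :=
  Fp p f /\ y <= f /\ forall g, Fp p g -> y <= g -> f <= g.

Definition faithful (p : nat) (y f : R) : Prop := is_RD p y f \/ is_RU p y f.

From Stdlib Require Import Reals ZArith Lra Lia Classical ClassicalEpsilon.
Open Scope R_scope.

(* Both operands lie on the grid 2^e Z, e the exponent of b: b by definition and a because
   uls a >= ulp b; their integer significands are below 2^p in magnitude because
   ufp a <= ufp b.  So a + b = Y 2^e with |Y| < 2^(p+1), and every faithful rounding s of it
   is S 2^e with |S - Y| <= 1: it is exact when Y fits in p bits or is even, and otherwise
   one of the two even neighbours of Y.  Then s - a = (S - A) 2^e and b - (s - a) = (Y - S) 2^e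
   are floating-point numbers, so the last two roundings are exact and s + t = a + b. *)

Local Notation bpow := (powerRZ 2).

Lemma bpow_pos e : 0 < bpow e.
Proof. apply powerRZ_lt; lra. Qed.

Lemma bpow_plus e f : bpow (e + f) = bpow e * bpow f.
Proof. apply powerRZ_add; lra. Qed.

Lemma bpow_IZR e : (0 <= e)%Z -> bpow e = IZR (2 ^ e).
Proof.
  intros He. rewrite <- (Z2Nat.id e He), <- pow_powerRZ. apply pow_IZR.
Qed.

Lemma bpow_lt e f : (e < f)%Z -> bpow e < bpow f.
Proof.
  intros H. rewrite !powerRZ_Rpower by lra.
  apply Rpower_lt; [lra | now apply IZR_lt].
Qed.

Lemma bpow_le e f : (e <= f)%Z -> bpow e <= bpow f.
Proof.
  intros H. rewrite !powerRZ_Rpower by lra.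
  apply Rle_Rpower; [lra | now apply IZR_le].
Qed.

Lemma bpow_le_inv e f : bpow e <= bpow f -> (e <= f)%Z.
Proof.
  intros H. destruct (Z_le_gt_dec e f) as [|Hfe]; [easy|].
  apply Z.gt_lt, bpow_lt in Hfe. lra.
Qed.

Lemma mul_bpow_change_exp M e f :
  (f <= e)%Z -> IZR M * bpow e = IZR (M * 2 ^ (e - f)) * bpow f.
Proof.
  intros H. rewrite mult_IZR, <- bpow_IZR, Rmult_assoc, <- bpow_plus by lia.
  do 3 f_equal. ring.
Qed.

Lemma Rabs_mul_bpow N e : Rabs (IZR N * bpow e) = IZR (Z.abs N) * bpow e.
Proof.
  rewrite Rabs_mult, abs_IZR, (Rabs_pos_eq (bpow e)); [easy|].
  apply Rlt_le, bpow_pos.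
Qed.

Lemma mul_bpow_le_inv N K e : IZR N * bpow e <= IZR K * bpow e -> (N <= K)%Z.
Proof.
  intros H. apply le_IZR, Rmult_le_reg_r with (bpow e); [apply bpow_pos | easy].
Qed.

Lemma mul_bpow_lt_inv N K e : IZR N * bpow e < IZR K * bpow e -> (N < K)%Z.
Proof.
  intros H. apply lt_IZR, Rmult_lt_reg_r with (bpow e); [apply bpow_pos | easy].
Qed.

Lemma Fp_nonzero_repr p x : (1 <= p)%nat -> Fp p x -> x <> 0 ->
  exists M e, x = IZR M * bpow e /\
    (2 ^ (Z.of_nat p - 1) <= Z.abs M < 2 ^ Z.of_nat p)%Z.
Proof.
  intros Hp [Hx0 | (M & e & Hx & H1 & H2)] Hnz; [contradiction|].
  exists M, e. split; [easy|].
  rewrite pow_IZR, <- abs_IZR in H1, H2.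
  apply le_IZR in H1. apply lt_IZR in H2.
  replace (Z.of_nat p - 1)%Z with (Z.of_nat (p - 1)) by lia. lia.
Qed.

Lemma Fp_int_mul_lt p N e : (Z.abs N < 2 ^ Z.of_nat p)%Z -> Fp p (IZR N * bpow e).
Proof.
  intros HN. destruct (Z.eq_dec N 0) as [-> | HN0]; [left; ring | right].
  set (L := Z.log2 (Z.abs N)).
  assert (HL : (2 ^ L <= Z.abs N < 2 ^ Z.succ L)%Z) by (apply Z.log2_spec; lia).
  assert (HL0 : (0 <= L)%Z) by apply Z.log2_nonneg.
  assert (HLp : (L < Z.of_nat p)%Z) by (apply Z.log2_lt_pow2; lia).
  set (j := (Z.of_nat p - 1 - L)%Z).
  assert (Hj : (0 < 2 ^ j)%Z) by (apply Z.pow_pos_nonneg; lia).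
  exists (N * 2 ^ j)%Z, (e - j)%Z. split.
  - rewrite (mul_bpow_change_exp N e (e - j)) by lia. do 4 f_equal. ring.
  - rewrite !pow_IZR, <- abs_IZR, Z.abs_mul, (Z.abs_eq (2 ^ j)) by lia.
    replace (Z.of_nat (p - 1)) with (L + j)%Z by lia.
    replace (Z.of_nat p) with (Z.succ L + j)%Z by lia.
    rewrite !Z.pow_add_r by lia.
    split; [apply IZR_le | apply IZR_lt]; nia.
Qed.

Lemma Fp_int_mul p N e : (1 <= p)%nat ->
  (Z.abs N <= 2 ^ Z.of_nat p)%Z -> Fp p (IZR N * bpow e).
Proof.
  intros Hp HN. destruct (Z_lt_le_dec (Z.abs N) (2 ^ Z.of_nat p)) as [Hlt | Hge].
  { now apply Fp_int_mul_lt. }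
  assert (Hp2 : (2 ^ Z.of_nat p = 2 * 2 ^ (Z.of_nat p - 1))%Z).
  { rewrite <- Z.pow_succ_r by lia. f_equal. lia. }
  assert (Hhalf : (0 < 2 ^ (Z.of_nat p - 1))%Z) by (apply Z.pow_pos_nonneg; lia).
  set (Nhalf := (Z.sgn N * 2 ^ (Z.of_nat p - 1))%Z).
  assert (HN2 : N = (Nhalf * 2 ^ (e + 1 - e))%Z).
  { replace (e + 1 - e)%Z with 1%Z by ring. unfold Nhalf.
    destruct (Z.sgn_spec N) as [[HN0 ->] | [[HN0 ->] | [HN0 ->]]]; lia. }
  rewrite HN2, <- mul_bpow_change_exp by lia.
  apply Fp_int_mul_lt. unfold Nhalf.
  destruct (Z.sgn_spec N) as [[_ ->] | [[_ ->] | [_ ->]]]; lia.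
Qed.

Lemma Rabs_repr_bounds p M e :
  (2 ^ (Z.of_nat p - 1) <= Z.abs M < 2 ^ Z.of_nat p)%Z -> (1 <= p)%nat ->
  bpow (Z.of_nat p - 1 + e) <= Rabs (IZR M * bpow e) < bpow (Z.of_nat p + e).
Proof.
  intros [H1 H2] Hp. pose proof (bpow_pos e).
  rewrite Rabs_mul_bpow, !bpow_plus, (bpow_IZR (Z.of_nat p - 1)), (bpow_IZR (Z.of_nat p)) by lia.
  apply IZR_le in H1. apply IZR_lt in H2. split; nra.
Qed.

Lemma ufp_eq x k : bpow k <= Rabs x < bpow (k + 1) -> ufp x = bpow k.
Proof.
  intros [H1 H2]. unfold ufp. f_equal.
  pose proof (bpow_pos k) as Hk.
  assert (Hln2 : 0 < ln 2) by (rewrite <- ln_1; apply ln_increasing; lra).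
  assert (Hln : forall z, ln (bpow z) = IZR z * ln 2).
  { intros z. rewrite powerRZ_Rpower by lra. apply ln_exp. }
  assert (A1 : IZR k * ln 2 <= ln (Rabs x)).
  { rewrite <- Hln. destruct H1 as [H1 | <-]; [apply Rlt_le, ln_increasing|]; lra. }
  assert (A2 : ln (Rabs x) < IZR (k + 1) * ln 2).
  { rewrite <- Hln. apply ln_increasing; lra. }
  unfold Int_part. rewrite <- (up_tech _ k); [ring | |].
  - apply Rmult_le_reg_r with (ln 2); [easy|]. field_simplify; lra.
  - apply Rmult_lt_reg_r with (ln 2); [easy|]. field_simplify; lra.
Qed.

Lemma ufp_repr p M e :
  (2 ^ (Z.of_nat p - 1) <= Z.abs M < 2 ^ Z.of_nat p)%Z -> (1 <= p)%nat ->
  ufp (IZR M * bpow e) = bpow (Z.of_nat p - 1 + e).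
Proof.
  intros HM Hp. apply ufp_eq.
  replace (Z.of_nat p - 1 + e + 1)%Z with (Z.of_nat p + e)%Z by ring.
  now apply Rabs_repr_bounds.
Qed.

Lemma ulp_repr p M e :
  (2 ^ (Z.of_nat p - 1) <= Z.abs M < 2 ^ Z.of_nat p)%Z -> (1 <= p)%nat ->
  ulp p (IZR M * bpow e) = bpow e.
Proof.
  intros HM Hp. unfold ulp. rewrite (ufp_repr p), <- bpow_plus by easy.
  f_equal. ring.
Qed.

Lemma exists_transition (Q : nat -> Prop) m : Q 0%nat -> ~ Q m -> exists n, Q n /\ ~ Q (S n).
Proof.
  induction m as [|m IH]; intros H0 Hm; [contradiction|].
  destruct (classic (Q m)); [now exists m | now apply IH].
Qed.

(* The predicate chosen in [uls] is satisfiable: for x = M 2^e the 2-adic valuation of x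
   lies between e and e + p - 1, as 2^p does not divide M. *)
Lemma uls_divides p x : (1 <= p)%nat -> Fp p x -> x <> 0 ->
  exists k z, uls x = bpow k /\ x = IZR z * bpow k.
Proof.
  intros Hp Fx Hx. destruct (Fp_nonzero_repr p x Hp Fx Hx) as (M & e & -> & H1 & H2).
  set (Val := fun k => is_int (IZR M * bpow e / bpow k) /\ ~ is_int (IZR M * bpow e / bpow (k + 1))).
  set (Q := fun n : nat => is_int (IZR M * bpow e / bpow (e + Z.of_nat n))).
  assert (HQ0 : Q 0%nat).
  { exists M. replace (e + Z.of_nat 0)%Z with e by lia. field. apply Rgt_not_eq, bpow_pos. }
  assert (HQp : ~ Q p).
  { intros [z Hz]. rewrite bpow_plus, (bpow_IZR (Z.of_nat p)) in Hz by lia.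
    pose proof (bpow_pos e).
    assert (Hpow : (0 < 2 ^ Z.of_nat p)%Z) by (apply Z.pow_pos_nonneg; lia).
    assert (HMz : IZR M = IZR (z * 2 ^ Z.of_nat p)).
    { rewrite mult_IZR, <- Hz. field. split; [apply not_0_IZR; lia | lra]. }
    apply eq_IZR in HMz. subst M.
    rewrite Z.abs_mul, (Z.abs_eq (2 ^ _)) in H1, H2 by lia.
    assert (0 < 2 ^ (Z.of_nat p - 1))%Z by (apply Z.pow_pos_nonneg; lia).
    destruct (Z.eq_dec z 0) as [-> | Hz0]; [lia|].
    assert (1 * 2 ^ Z.of_nat p <= Z.abs z * 2 ^ Z.of_nat p)%Z
      by (apply Z.mul_le_mono_nonneg_r; lia).
    lia. }
  assert (Hval : exists k, Val k).
  { destruct (exists_transition Q p HQ0 HQp) as (n & Hn & HSn).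
    exists (e + Z.of_nat n)%Z. split; [easy|].
    now replace (e + Z.of_nat n + 1)%Z with (e + Z.of_nat (S n))%Z by lia. }
  destruct (epsilon_spec (inhabits 0%Z) Val Hval) as [[z Hz] _].
  exists (epsilon (inhabits 0%Z) Val), z. split; [easy|].
  rewrite <- Hz. field. apply Rgt_not_eq, bpow_pos.
Qed.

Lemma faithful_Fp p y f : faithful p y f -> Fp p f.
Proof. now intros [[Hf _] | [Hf _]]. Qed.

Lemma faithful_between p y f g1 g2 : faithful p y f -> Fp p g1 -> Fp p g2 ->
  g1 <= y <= g2 -> g1 <= f <= g2.
Proof.
  intros [(_ & Hfy & Hmax) | (_ & Hyf & Hmin)] F1 F2 Hy.
  - split; [apply Hmax | ]; (easy || lra).
  - split; [ | apply Hmin]; (easy || lra).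
Qed.

Lemma faithful_exact p y f : faithful p y f -> Fp p y -> f = y.
Proof.
  intros Hf Fy. pose proof (faithful_between p y f y y Hf Fy Fy). lra.
Qed.

Lemma Fp_large_on_grid p g k : (1 <= p)%nat -> Fp p g -> bpow k <= Rabs g ->
  exists N, g = IZR N * bpow (k - Z.of_nat p + 1).
Proof.
  intros Hp Fg Hg.
  assert (Hg0 : g <> 0).
  { intros ->. rewrite Rabs_R0 in Hg. pose proof (bpow_pos k). lra. }
  destruct (Fp_nonzero_repr p g Hp Fg Hg0) as (M & e & -> & HM).
  pose proof (Rabs_repr_bounds p M e HM Hp) as [_ Hlt].
  assert (Hke : (k < Z.of_nat p + e)%Z).
  { destruct (Z_lt_le_dec k (Z.of_nat p + e)) as [|Hle]; [easy|].
    apply bpow_le in Hle. lra. }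
  exists (M * 2 ^ (e - (k - Z.of_nat p + 1)))%Z. apply mul_bpow_change_exp. lia.
Qed.

Lemma faithful_on_grid p Y e y f : (1 <= p)%nat ->
  y = IZR Y * bpow e -> (Z.abs Y < 2 * 2 ^ Z.of_nat p)%Z -> faithful p y f ->
  exists S, f = IZR S * bpow e /\ (Z.abs (S - Y) <= 1)%Z.
Proof.
  intros Hp Hy HY Hf.
  assert (Hdouble : forall W, IZR W * bpow (e + 1) = IZR (2 * W) * bpow e).
  { intros W. rewrite (mul_bpow_change_exp W (e + 1) e) by lia.
    replace (e + 1 - e)%Z with 1%Z by ring. do 2 f_equal. ring. }
  assert (Hexact : Fp p y -> exists S, f = IZR S * bpow e /\ (Z.abs (S - Y) <= 1)%Z).
  { intros Fy. exists Y. rewrite (faithful_exact p y f Hf Fy), Hy. split; [easy | lia]. }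
  destruct (Z_le_gt_dec (Z.abs Y) (2 ^ Z.of_nat p)) as [Hsmall | Hlarge].
  { apply Hexact. rewrite Hy. now apply Fp_int_mul. }
  destruct (Z.Even_or_Odd Y) as [[W HW] | [W HW]].
  { apply Hexact. rewrite Hy, HW, <- Hdouble. apply Fp_int_mul; lia. }
  (* Y odd, |Y| > 2^p: f lies between the floats (Y - 1) 2^e and (Y + 1) 2^e,
     and floats that large are multiples of 2^(e+1). *)
  assert (Hbetween : IZR (Y - 1) * bpow e <= f <= IZR (Y + 1) * bpow e).
  { pose proof (bpow_pos e).
    apply (faithful_between p y); [easy | | | ].
    - replace (Y - 1)%Z with (2 * W)%Z by lia. rewrite <- Hdouble. apply Fp_int_mul; lia.
    - replace (Y + 1)%Z with (2 * (W + 1))%Z by lia. rewrite <- Hdouble. apply Fp_int_mul; lia.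
    - rewrite Hy. split; apply Rmult_le_compat_r; try lra; apply IZR_le; lia. }
  assert (Hbig : bpow (Z.of_nat p + e) <= Rabs f).
  { pose proof (bpow_pos e). rewrite bpow_plus, bpow_IZR by lia.
    destruct (Z_lt_le_dec 0 Y) as [Hpos | Hneg].
    - assert (IZR (2 ^ Z.of_nat p) <= IZR (Y - 1)) by (apply IZR_le; lia).
      pose proof (Rle_abs f). nra.
    - assert (IZR (Y + 1) <= - IZR (2 ^ Z.of_nat p)) by (rewrite <- opp_IZR; apply IZR_le; lia).
      pose proof (Rle_abs (- f)). rewrite Rabs_Ropp in *. nra. }
  destruct (Fp_large_on_grid p f (Z.of_nat p + e) Hp (faithful_Fp p y f Hf) Hbig) as [N HN].
  replace (Z.of_nat p + e - Z.of_nat p + 1)%Z with (e + 1)%Z in HN by ring.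
  rewrite Hdouble in HN. rewrite HN in Hbetween. destruct Hbetween as [B1 B2].
  apply mul_bpow_le_inv in B1, B2.
  exists (2 * N)%Z. split; [easy | lia].
Qed.

Lemma Fp_operands_on_common_grid p a b : (1 <= p)%nat ->
  Fp p a -> Fp p b -> a <> 0 -> b <> 0 ->
  ufp a <= ufp b -> uls a >= ulp p b ->
  exists e A B, a = IZR A * bpow e /\ b = IZR B * bpow e /\
    (Z.abs A < 2 ^ Z.of_nat p)%Z /\ (Z.abs B < 2 ^ Z.of_nat p)%Z.
Proof.
  intros Hp Fa Fb Ha Hb Hufp Huls.
  destruct (uls_divides p a Hp Fa Ha) as (k & z & Hk & Haz).
  destruct (Fp_nonzero_repr p a Hp Fa Ha) as (Ma & ea & Hea & HMa).
  destruct (Fp_nonzero_repr p b Hp Fb Hb) as (Mb & eb & -> & HMb).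
  rewrite (ulp_repr p), Hk in Huls by easy.
  apply Rge_le, bpow_le_inv in Huls.
  rewrite Hea, !(ufp_repr p) in Hufp by easy.
  apply bpow_le_inv in Hufp.
  exists eb, (z * 2 ^ (k - eb))%Z, Mb.
  rewrite <- mul_bpow_change_exp by easy.
  split; [easy | split; [easy | split; [ | lia]]].
  apply mul_bpow_lt_inv with eb.
  rewrite <- Rabs_mul_bpow, <- (mul_bpow_change_exp z k eb), <- Haz, Hea by easy.
  rewrite <- bpow_IZR, <- bpow_plus by lia.
  eapply Rlt_le_trans; [apply (Rabs_repr_bounds p Ma ea HMa Hp) | apply bpow_le; lia].
Qed.

Lemma fast2sum_exact_on_grid p e A B a b s u t : (1 <= p)%nat ->
  a = IZR A * bpow e -> b = IZR B * bpow e ->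
  (Z.abs A < 2 ^ Z.of_nat p)%Z -> (Z.abs B < 2 ^ Z.of_nat p)%Z ->
  faithful p (a + b) s -> faithful p (s - a) u -> faithful p (b - u) t ->
  s + t = a + b.
Proof.
  intros Hp -> -> HA HB Hs Hu Ht.
  destruct (faithful_on_grid p (A + B) e (IZR A * bpow e + IZR B * bpow e) s Hp)
    as (S & -> & HS); [rewrite plus_IZR; ring | lia | easy |].
  assert (Hu_exact : u = IZR (S - A) * bpow e).
  { rewrite minus_IZR, Rmult_minus_distr_r. apply (faithful_exact p _ _ Hu).
    rewrite <- Rmult_minus_distr_r, <- minus_IZR. apply Fp_int_mul; lia. }
  assert (Ht_exact : t = IZR (B - (S - A)) * bpow e).
  { rewrite Hu_exact in Ht. rewrite minus_IZR, Rmult_minus_distr_r. apply (faithful_exact p _ _ Ht).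
    rewrite <- Rmult_minus_distr_r, <- minus_IZR. apply Fp_int_mul; lia. }
  rewrite Ht_exact, !minus_IZR. ring.
Qed.

Theorem lemma2 (p : nat) (a b s u t : R) :
  (2 <= p)%nat ->
  Fp p a -> Fp p b -> a <> 0 -> b <> 0 ->
  ufp a <= ufp b ->
  uls a >= ulp p b ->
  faithful p (a + b) s ->
  faithful p (s - a) u ->
  faithful p (b - u) t ->
  s + t = a + b.
Proof.
  intros Hp Fa Fb Ha Hb Hufp Huls Hs Hu Ht.
  assert (Hp1 : (1 <= p)%nat) by lia.
  destruct (Fp_operands_on_common_grid p a b Hp1 Fa Fb Ha Hb Hufp Huls)
    as (e & A & B & HA & HB & HAbound & HBbound).
  exact (fast2sum_exact_on_grid p e A B a b s u t Hp1 HA HB HAbound HBbound Hs Hu Ht).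
Qed.
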